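(* Consider a dynamical system $\dot{x} = F(x)$, $x \in \mathbb{R}^n$, with $F$ locally Lipschitz, where the state is partitioned as $x = (x_1^T, x_2^T, \dots, x_m^T)^T$ with $x_i \in \mathbb{R}^{n_i}$ and $\sum_{i=1}^m n_i = n$. For each $i \in \{1,\dots,m\}$ let $v_i : \mathbb{R}^{n_i} \to \mathbb{R}$ be a continuously differentiable positive definite function (a Lyapunov function: $v_i(0)=0$ and $v_i(x_i) > 0$ for $x_i \neq 0$), and let $v(x) = (v_1(x_1), \dots, v_m(x_m))^T$. Let $\mathcal{D} \subseteq \mathbb{R}^n$ be a domain. Suppose there is a matrix $\tilde{A} = [\tilde{a}_{ij}] \in \mathbb{R}^{m \times m}$ with $\tilde{a}_{ij} \geq 0$ for all $i \neq j$ and $\sum_{j=1}^m \tilde{a}_{ij} < 0$ for all $i$, such that $$\dot{v}(x) \leq \tilde{A}\, v(x) \quad \text{(componentwise) for all } x \in \mathcal{D},$$ where $\dot{v}_i(x) = \nabla v_i(x_i)^T F_i(x)$ denotes the derivative of $v_i$ along the dynamics and $F_i$ is the block of $F$ corresponding to $x_i$. Define $V_i := v_i^2$ for each $i$ and $V(x) = (V_1(x_1), \dots, V_m(x_m))^T$. Then there exists a matrix $A = [a_{ij}] \in \mathbb{R}^{m\times m}$ such that $$\dot{V}(x) \leq A\, V(x) \quad \text{(componentwise) for all } x \in \mathcal{D},$$ with $a_{ij} \geq 0$ for all $i \neq j$ and $\sum_{j=1}^m a_{ij} < \sum_{j=1}^m \tilde{a}_{ij} < 0$ for all $i$.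
   Context: Inequalities between vectors are understood componentwise. $\nabla v_i$ denotes the gradient of $v_i$ with respect to $x_i$, and $\dot{V}_i(x) = \nabla V_i(x_i)^T F_i(x)$ is the derivative of $V_i$ along trajectories of $\dot{x}=F(x)$. *)

From HB Require Import structures.
From mathcomp Require Import all_boot all_order all_algebra.
From mathcomp Require Import all_classical all_reals all_analysis.
Set Implicit Arguments. Unset Strict Implicit. Unset Printing Implicit Defensive.
Import Order.TTheory GRing.Theory Num.Theory.
Import numFieldNormedType.Exports.
Local Open Scope classical_set_scope.
Local Open Scope ring_scope.

(* The full state space R^N with N = \sum_i n_i, as row vectors; the block
   x_i of x is [submxrow x i : 'rV_(n i)]. *)
Definition block {R : realType} {m : nat} {n : 'I_m -> nat}
  (x : 'rV[R]_(\sum_(i < m) n i)) (i : 'I_m) : 'rV[R]_(n i) := submxrow x i.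

Definition locally_lipschitz {R : realType} {N : nat}
  (F : 'rV[R]_N -> 'rV[R]_N) : Prop :=
  forall x : 'rV[R]_N, exists r : R, 0 < r /\ exists L : R,
    forall y z, ball x r y -> ball x r z -> `|F y - F z| <= L * `|y - z|.

Definition C1 {R : realType} {k : nat} (f : 'rV[R]_k -> R) : Prop :=
  (forall y, differentiable f y) /\
  (forall u : 'rV[R]_k, continuous (fun y => 'd f y u)).

Definition pos_def {R : realType} {k : nat} (f : 'rV[R]_k -> R) : Prop :=
  f 0 = 0 /\ forall y, y != 0 -> 0 < f y.

Definition domain {R : realType} {N : nat} (D : set 'rV[R]_N) : Prop :=
  D !=set0 /\ open D /\ connected D.

Definition lie_deriv {R : realType} {m : nat} {n : 'I_m -> nat}
  (F : 'rV[R]_(\sum_(i < m) n i) -> 'rV[R]_(\sum_(i < m) n i))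
  (i : 'I_m) (f : 'rV[R]_(n i) -> R) (x : 'rV[R]_(\sum_(i < m) n i)) : R :=
  'd f (block x i) (block (F x) i).

From HB Require Import structures.
From mathcomp Require Import all_boot all_order all_algebra.
From mathcomp Require Import all_classical all_reals all_analysis.
From mathcomp Require Import ring.
Set Implicit Arguments. Unset Strict Implicit. Unset Printing Implicit Defensive.
Import Order.TTheory GRing.Theory Num.Theory.
Import numFieldNormedType.Exports.
Local Open Scope classical_set_scope.
Local Open Scope ring_scope.

(* By the chain rule V_i' = 2 v_i v_i' <= 2 v_i (sum_j At_ij v_j), using v_i >= 0.
   Off the diagonal At_ij >= 0 and 2 v_i v_j <= v_i^2 + v_j^2, so
   V_i' <= sum_j At_ij (V_j + V_i): this is A V for A = At + diag(row sums of At).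
   The row sums of A are twice those of At, hence strictly smaller, as the latter
   are negative. *)

Section AddDiagRowsum.
Variables (R : realDomainType) (m : nat) (At : 'M[R]_m).

Definition add_diag_rowsum : 'M[R]_m :=
  \matrix_(i, j) (At i j + (i == j)%:R * \sum_(k < m) At i k).

Lemma add_diag_rowsum_offdiag i j : i != j -> add_diag_rowsum i j = At i j.
Proof. by move=> /negPf nij; rewrite mxE nij mul0r addr0. Qed.

Lemma sum_delta_row (i : 'I_m) : \sum_(j < m) ((i == j)%:R : R) = 1.
Proof.
rewrite (bigD1 i) //= eqxx big1 ?addr0 // => j.
by rewrite eq_sym => /negPf ->.
Qed.

Lemma rowsum_add_diag_rowsum i :
  \sum_(j < m) add_diag_rowsum i j = (\sum_(j < m) At i j) *+ 2.
Proof.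
under eq_bigr do rewrite mxE.
by rewrite big_split /= -big_distrl /= sum_delta_row mul1r mulr2n.
Qed.

Lemma add_diag_rowsum_quadE (w : 'I_m -> R) i :
  \sum_(j < m) add_diag_rowsum i j * w j ^+ 2
  = \sum_(j < m) At i j * (w j ^+ 2 + w i ^+ 2).
Proof.
under eq_bigr do rewrite mxE mulrDl.
under [RHS]eq_bigr do rewrite mulrDr.
rewrite !big_split /= -[in RHS]big_distrl /=; congr (_ + _).
rewrite (bigD1 i) //= eqxx mul1r [X in _ + X]big1 ?addr0 // => j.
by rewrite eq_sym => /negPf ->; rewrite !mul0r.
Qed.

Hypothesis At_offdiag_ge0 : forall i j, i != j -> 0 <= At i j.

Lemma rate_of_squares_le (w : 'I_m -> R) i :
  2 * w i * \sum_(j < m) At i j * w j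
  <= \sum_(j < m) add_diag_rowsum i j * w j ^+ 2.
Proof.
rewrite add_diag_rowsum_quadE big_distrr /=; apply: ler_sum => j _.
have [->|nji] := eqVneq j i; first by rewrite le_eqVlt; apply/orP; left; apply/eqP; ring.
rewrite mulrCA ler_wpM2l ?At_offdiag_ge0 1?eq_sym //.
have -> : w j ^+ 2 + w i ^+ 2 = (w i - w j) ^+ 2 + 2 * w i * w j by ring.
by rewrite lerDr sqr_ge0.
Qed.

End AddDiagRowsum.

Lemma pos_def_ge0 (R : realType) (k : nat) (f : 'rV[R]_k -> R) y :
  pos_def f -> 0 <= f y.
Proof.
case=> f0 fpos; have [->|/fpos/ltW //] := eqVneq y 0.
by rewrite f0.
Qed.

Lemma diff_sqr (R : numFieldType) (V : normedModType R) (f : V -> R) x u :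
  differentiable f x -> 'd (fun y => f y ^+ 2) x u = 2 * f x * 'd f x u.
Proof.
move=> dfx; have -> : (fun y => f y ^+ 2) = f ^+ 2.
  by apply: funext => y; rewrite exprfctE.
by rewrite diffX //= expr1.
Qed.

Theorem lemma2 (R : realType) (m : nat) (n : 'I_m -> nat)
  (F : 'rV[R]_(\sum_(i < m) n i) -> 'rV[R]_(\sum_(i < m) n i))
  (v : forall i : 'I_m, 'rV[R]_(n i) -> R)
  (D : set 'rV[R]_(\sum_(i < m) n i))
  (At : 'M[R]_m) :
  locally_lipschitz F ->
  (forall i, C1 (v i)) ->
  (forall i, pos_def (v i)) ->
  domain D ->
  (forall i j, i != j -> 0 <= At i j) ->
  (forall i, \sum_(j < m) At i j < 0) ->
  (forall x, D x -> forall i,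
     lie_deriv F (v i) x <= \sum_(j < m) At i j * v j (block x j)) ->
  exists A : 'M[R]_m,
    (forall x, D x -> forall i,
       lie_deriv F (fun y => (v i y) ^+ 2) x
         <= \sum_(j < m) A i j * (v j (block x j)) ^+ 2) /\
    (forall i j, i != j -> 0 <= A i j) /\
    (forall i, \sum_(j < m) A i j < \sum_(j < m) At i j /\
               \sum_(j < m) At i j < 0).
Proof.
move=> _ v_C1 v_pd _ At_offdiag At_rowsum v_rate.
exists (add_diag_rowsum At); split; last split.
- move=> x Dx i; rewrite /lie_deriv diff_sqr; last by case: (v_C1 i).
  apply: le_trans (rate_of_squares_le At_offdiag (fun j => v j (block x j)) i).
  by rewrite ler_wpM2l ?mulr_ge0 ?pos_def_ge0 //; exact: v_rate.
- by move=> i j nij; rewrite add_diag_rowsum_offdiag // At_offdiag.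
- move=> i; split; last exact: At_rowsum.
  by rewrite rowsum_add_diag_rowsum mulr2n gtrDr At_rowsum.
Qed.
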